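(* Let $X$ and $Y$ be compact Hausdorff spaces and let $A(X)\subseteq C(X)$ and $A(Y)\subseteq C(Y)$ be (real) vector subspaces that contain the constant functions and precisely separate points from closed sets. If $T: A(X)\to A(Y)$ is a linear order isomorphism, then there is a homeomorphism $h:X\to Y$ such that $Tf = T1_X\cdot (f\circ h^{-1})$ for all $f\in A(X)$.
   Context: All function spaces are real. $C(X)$ denotes the real-valued continuous functions on $X$, and $1_X$ the constant function $1$ on $X$. A subspace $A(X)\subseteq C(X)$ separates points from closed sets if for every $x\in X$ and every closed $F\subseteq X$ with $x\notin F$ there is $f\in A(X)$ with $f(x)=1$ and $f=0$ on $F$; it precisely separates points from closed sets if moreover such $f$ can always be chosen with values in $[0,1]$. A linear bijection $T:A(X)\to A(Y)$ is an order isomorphism if for every $f\in A(X)$, $f\ge 0$ (pointwise) if and only if $Tf\ge 0$. *)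

From HB Require Import structures.
From mathcomp Require Import all_boot all_order all_algebra.
From mathcomp Require Import all_classical all_reals all_analysis.
Set Implicit Arguments. Unset Strict Implicit. Unset Printing Implicit Defensive.
Import Order.TTheory GRing.Theory Num.Theory.
Import numFieldNormedType.Exports.
Local Open Scope classical_set_scope.
Local Open Scope ring_scope.

Definition is_function_space (R : realType) (X : topologicalType)
  (A : set (X -> R)) : Prop :=
  [/\ forall f, A f -> continuous f,
      A (fun _ => 0),
      (forall f g, A f -> A g -> A (fun x => f x + g x)) &
      (forall (a : R) f, A f -> A (fun x => a * f x))].

Definition contains_constants (R : realType) (X : topologicalType)
  (A : set (X -> R)) : Prop := forall c : R, A (fun _ => c).

Definition precisely_separates (R : realType) (X : topologicalType)
  (A : set (X -> R)) : Prop :=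
  forall (x : X) (F : set X), closed F -> ~ F x ->
    exists f, [/\ A f, f x = 1, (forall y, F y -> f y = 0) &
                   (forall y, 0 <= f y <= 1)].

Definition linear_order_iso (R : realType) (X Y : topologicalType)
  (A : set (X -> R)) (B : set (Y -> R)) (T : (X -> R) -> (Y -> R)) : Prop :=
  [/\ (forall f, A f -> B (T f)),
      (forall (a : R) f g, A f -> A g ->
          T (fun x => a * f x + g x) = (fun y => a * T f y + T g y)),
      (forall f g, A f -> A g -> T f = T g -> f = g),
      (forall g, B g -> exists2 f, A f & T f = g) &
      (forall f, A f -> ((forall x, 0 <= f x) <-> (forall y, 0 <= T f y)))].

From HB Require Import structures.
From mathcomp Require Import all_boot all_order all_algebra.
From mathcomp Require Import all_classical all_reals all_analysis.
From mathcomp Require Import lra finmap.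
Import Order.TTheory GRing.Theory Num.Theory.
Import numFieldNormedType.Exports.
Local Open Scope classical_set_scope.
Local Open Scope ring_scope.
Set Implicit Arguments.

(* For y in Y, f |-> T f y is a positive linear functional on A.  Call x a
   support point of a positive functional phi when every neighbourhood U of x
   carries some 0 <= f in A vanishing off U with 0 < phi f.  Summing finitely
   many bump functions over a compact set shows that phi has a support point
   as soon as 0 < phi 1, and that phi f = phi 1 * f x0 when x0 is its only
   support point.  For f |-> T f y there is only one: two support points with
   disjoint neighbourhoods would leave T^-1 of a bump around y below two
   functions with disjoint supports, hence zero.  This yields T f = T 1 * f \o k
   with k continuous, and the map obtained in the same way from T^-1 is the
   inverse of k. *)

Definition pointed_at {T : topologicalType} (x : T) : Type := T.
HB.instance Definition _ (T : topologicalType) (x : T) :=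
  Topological.copy (pointed_at x) T.
HB.instance Definition _ (T : topologicalType) (x : T) :=
  isPointed.Build (pointed_at x) x.

(* [compact_cover] is stated for pointed spaces; any point [x] makes [T] one. *)
Lemma compact_finite_subcover (T : topologicalType) (x : T) {K : set T}
    {I : choiceType} {D : set I} {f : I -> set T} :
  compact K -> (forall i, D i -> open (f i)) -> K `<=` cover D f ->
  finite_subset_cover D f K.
Proof.
by move=> cK; have : @compact (pointed_at x) K := cK; rewrite compact_cover; apply.
Qed.

Lemma compact_continuous_bounded (R : realType) (X : topologicalType)
    (f : X -> R) :
  compact [set: X] -> continuous f -> exists2 M, 0 <= M & forall x, `|f x| <= M.
Proof.
move=> cX fc.
have [M [_ HM]] := @compact_bounded R R^o _
  (continuous_compact (continuous_subspaceT fc) cX).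
exists (`|M| + 1) => [|x]; first by rewrite addr_ge0.
by apply: (HM (`|M| + 1)); [rewrite (le_lt_trans (ler_norm M)) ?ltrDl | exists x].
Qed.

Section FunctionSpace.
Variables (R : realType) (X : topologicalType) (A : set (X -> R)).
Hypothesis fsA : is_function_space A.

Lemma function_space_continuous f : A f -> continuous f.
Proof. by case: fsA => + _ _ _; apply. Qed.

Lemma function_space0 : A (fun _ => 0).
Proof. by case: fsA. Qed.

Lemma function_space_lincomb a f g : A f -> A g -> A (fun x => a * f x + g x).
Proof. by case: fsA => _ _ fsD fsZ Af Ag; apply: fsD => //; apply: fsZ. Qed.

Lemma function_space_sum (I : eqType) (g : I -> X -> R) (s : seq I) :
  (forall i, i \in s -> A (g i)) -> A (fun x => \sum_(i <- s) g i x).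
Proof.
elim: s => [|i s IHs] Ag.
  by under eq_fun do rewrite big_nil; exact: function_space0.
under eq_fun do rewrite big_cons -[g i _]mul1r.
apply: function_space_lincomb; first by apply: Ag; rewrite mem_head.
by apply: IHs => j js; apply: Ag; rewrite in_cons js orbT.
Qed.

End FunctionSpace.

Definition functional_support {R : realType} {X : topologicalType}
    (A : set (X -> R)) (phi : (X -> R) -> R) : set X :=
  [set x | forall U, open U -> U x -> exists f,
    [/\ A f, forall z, 0 <= f z, forall z, ~ U z -> f z = 0 & 0 < phi f]].

Section PositiveFunctional.
Variables (R : realType) (X : topologicalType) (A : set (X -> R)).
Variable phi : (X -> R) -> R.
Hypotheses (cX : compact [set: X]) (fsA : is_function_space A)
  (cA : contains_constants A) (psA : precisely_separates A).
Hypothesis phi_lincomb : forall a f g, A f -> A g ->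
  phi (fun x => a * f x + g x) = a * phi f + phi g.
Hypothesis phi_ge0 : forall f, A f -> (forall x, 0 <= f x) -> 0 <= phi f.

Let A0 := function_space0 fsA.
Let Alincomb := function_space_lincomb fsA.

Lemma functional0 : phi (fun _ => 0) = 0.
Proof.
have := phi_lincomb 1 A0 A0.
under [X in phi X]eq_fun do rewrite mul1r addr0.
lra.
Qed.

Lemma functionalZ a f : A f -> phi (fun x => a * f x) = a * phi f.
Proof.
move=> Af; under eq_fun do rewrite -[_ * _]addr0.
by rewrite phi_lincomb // functional0 addr0.
Qed.

Lemma functional_cst c : phi (fun _ => c) = c * phi (fun _ => 1).
Proof. by rewrite -functionalZ //; congr phi; apply: funext => x; rewrite mulr1. Qed.

Lemma functional_le f g : A f -> A g -> (forall x, f x <= g x) -> phi f <= phi g.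
Proof.
move=> Af Ag fg.
suff : 0 <= phi (fun x => -1 * f x + g x) by rewrite phi_lincomb //; lra.
by apply: phi_ge0 => [|x]; [exact: Alincomb | have := fg x; lra].
Qed.

Lemma functional_norm_le f w : A f -> A w -> (forall x, `|f x| <= w x) ->
  `|phi f| <= phi w.
Proof.
move=> Af Aw fw; rewrite ler_norml; apply/andP; split.
  rewrite -mulN1r -functionalZ //; apply: functional_le => // [|x].
    by under eq_fun do rewrite -[_ * _]addr0; exact: Alincomb.
  by have := fw x; rewrite ler_norml => /andP[]; lra.
by apply: functional_le => // x; have := fw x; rewrite ler_norml => /andP[].
Qed.

Lemma functional_sum (I : eqType) (g : I -> X -> R) (s : seq I) :
  (forall i, i \in s -> A (g i)) ->
  phi (fun x => \sum_(i <- s) g i x) = \sum_(i <- s) phi (g i).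
Proof.
elim: s => [|i s IHs] Ag.
  by under eq_fun do rewrite big_nil; rewrite functional0 big_nil.
have As : forall j, j \in s -> A (g j).
  by move=> j js; apply: Ag; rewrite in_cons js orbT.
under eq_fun do rewrite big_cons -[g i _]mul1r.
rewrite phi_lincomb ?IHs ?big_cons ?mul1r //; first by apply: Ag; rewrite mem_head.
exact: function_space_sum.
Qed.

Lemma off_support_bump x : ~ functional_support A phi x ->
  exists f, [/\ A f, forall z, 0 <= f z, f x = 1 & phi f <= 0].
Proof.
move=> /existsNP[U /not_implyP[oU /not_implyP[Ux /forallNP nopos]]].
have [f [Af fx1 f0 f01]] := psA x (open_closedC oU) (fun nUx => nUx Ux).
have f_ge0 z : 0 <= f z by case/andP: (f01 z).
exists f; split => //; rewrite leNgt; apply/negP => phif.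
by apply: (nopos f); split.
Qed.

Lemma off_support_closed_bump F : closed F ->
    (forall x, F x -> ~ functional_support A phi x) ->
  exists s, [/\ A s, forall z, 0 <= s z, forall z, F z -> 2^-1 < s z & phi s <= 0].
Proof.
move=> cF Fout.
have [[x0 Fx0]|noF] := pselect (exists x, F x); last first.
  exists (fun _ => 0); split=> //; last by rewrite functional0.
  by move=> z Fz; case: noF; exists z.
have bump x : exists f, F x -> [/\ A f, forall z, 0 <= f z, f x = 1 & phi f <= 0].
  have [Fx|] := pselect (F x); last by exists (fun _ => 0).
  by have [f ?] := off_support_bump (Fout x Fx); exists f.
have [b bP] := choice bump.
have [D DF Dcover] : finite_subset_cover F (fun i => [set z | 2^-1 < b i z]) F.
  apply: (compact_finite_subcover x0 (subclosed_compact cF cX (@subsetT _ F))).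
  - move=> i Fi; have [Ai _ _ _] := bP i Fi.
    apply: (@open_comp _ _ (b i) [set r | 2^-1 < r]); last exact: open_gt.
    by move=> z _; exact: function_space_continuous fsA _ Ai z.
  - by move=> x Fx; exists x => //=; have [_ _ -> _] := bP x Fx; lra.
have DbP i : i \in enum_fset D ->
    [/\ A (b i), forall z, 0 <= b i z, b i i = 1 & phi (b i) <= 0].
  by move/DF; rewrite in_setE => /bP.
exists (fun z => \sum_(i <- enum_fset D) b i z); split.
- by apply: function_space_sum => // i /DbP[].
- by move=> z; rewrite big_seq; apply: sumr_ge0 => i /DbP[_ + _ _]; apply.
- move=> z /Dcover[i /= Di bi]; apply: (lt_le_trans bi).
  rewrite (big_rem i) //= lerDl big_seq.
  by apply: sumr_ge0 => j /mem_rem/DbP[_ + _ _]; apply.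
- rewrite functional_sum => [|i /DbP[] //].
  by rewrite big_seq; apply: sumr_le0 => i /DbP[].
Qed.

Lemma functional_support_nonempty : 0 < phi (fun _ => 1) ->
  exists x, functional_support A phi x.
Proof.
move=> phi1; apply: contrapT => /forallNP nosupp.
have [s [As s_ge0 s_gt phis]] := off_support_closed_bump closedT (fun x _ => nosupp x).
have : 0 <= phi (fun x => 2 * s x + -1).
  by apply: phi_ge0 => [|x]; [exact: Alincomb | have := s_gt x I; lra].
by rewrite (phi_lincomb 2 As (cA (-1))) functional_cst; lra.
Qed.

Section SingletonSupport.
Variable x0 : X.
Hypothesis supp_x0 : functional_support A phi `<=` [set x0].

Lemma functional_vanish_norm_le g : A g -> g x0 = 0 ->
  forall d, 0 < d -> `|phi g| <= d * phi (fun _ => 1).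
Proof.
move=> Ag gx0 d d_gt0.
have g_cont := function_space_continuous fsA _ Ag.
have [M M_ge0 gM] := compact_continuous_bounded cX g_cont.
have cF : closed [set z | d <= `|g z|].
  apply: (@preimage_closed _ _ (fun z => `|g z|) [set r | d <= r]); last first.
    exact: closed_ge.
  by move=> z _; apply: continuous_comp; [exact: g_cont | exact: norm_continuous].
have Fout x : d <= `|g x| -> ~ functional_support A phi x.
  by move=> dg /supp_x0 xx0; move: dg; rewrite xx0 gx0 normr0; lra.
have [s [As s_ge0 s_gt phis]] := off_support_closed_bump cF Fout.
apply: (@le_trans _ _ (phi (fun x => (2 * M) * s x + d))).
  apply: functional_norm_le => // [|x]; first exact: Alincomb.
  have := s_ge0 x; have [dg|gd] := leP d `|g x|; last by nra.
  by have := s_gt x dg; have := gM x; nra.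
by rewrite (phi_lincomb _ As (cA d)) functional_cst; nra.
Qed.

Lemma functional_point_eval f : A f -> phi f = phi (fun _ => 1) * f x0.
Proof.
move=> Af; pose g x := 1 * f x + - f x0.
have Ag : A g by exact: Alincomb.
have c_ge0 : 0 <= phi (fun _ => 1) by apply: phi_ge0 => // x; lra.
suff : `|phi g| <= 0.
  rewrite normr_le0 /g phi_lincomb // functional_cst mul1r mulNr subr_eq0.
  by rewrite mulrC => /eqP.
apply/ler_addgt0Pr => e e_gt0; rewrite add0r.
have c1_gt0 : 0 < phi (fun _ => 1) + 1 by lra.
have gx0 : g x0 = 0 by rewrite /g; lra.
apply: (le_trans (functional_vanish_norm_le Ag gx0 _ (divr_gt0 e_gt0 c1_gt0))).
by rewrite mulrAC ler_pdivrMr //; nra.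
Qed.

End SingletonSupport.

End PositiveFunctional.

Section OrderIsomorphism.
Variables (R : realType) (X Y : topologicalType).
Variables (A : set (X -> R)) (B : set (Y -> R)) (T : (X -> R) -> (Y -> R)).
Hypotheses (cX : compact [set: X]) (hX : hausdorff_space X)
  (fsA : is_function_space A) (cA : contains_constants A)
  (psA : precisely_separates A) (fsB : is_function_space B)
  (cB : contains_constants B) (psB : precisely_separates B)
  (iso : linear_order_iso A B T).

Lemma order_iso_in f : A f -> B (T f).
Proof. by case: iso => + _ _ _ _; apply. Qed.

Lemma order_iso_lincomb y a f g : A f -> A g ->
  T (fun x => a * f x + g x) y = a * T f y + T g y.
Proof. by case: iso => _ + _ _ _ => Tlin Af Ag; rewrite Tlin. Qed.

Lemma order_iso_surj g : B g -> exists2 f, A f & T f = g.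
Proof. by case: iso => _ _ _ + _; apply. Qed.

Lemma order_iso_ge0 y f : A f -> (forall x, 0 <= f x) -> 0 <= T f y.
Proof. by case: iso => _ _ _ _ Tge0 Af /(Tge0 f Af). Qed.

Lemma order_iso_ge0_inv f : A f -> (forall y, 0 <= T f y) -> forall x, 0 <= f x.
Proof. by case: iso => _ _ _ _ Tge0 Af /(Tge0 f Af). Qed.

Lemma order_iso_one_gt0 y : 0 < T (fun _ => 1) y.
Proof.
have T1_ge0 : 0 <= T (fun _ => 1) y by apply: order_iso_ge0 => // x; rewrite ler01.
rewrite lt_def T1_ge0 andbT; apply/eqP => T1y.
have [u Au Tu] := order_iso_surj (cB 1).
have [M _ uM] := compact_continuous_bounded cX (function_space_continuous fsA _ Au).
have := functional_le (fun f => T f y) fsA (@order_iso_lincomb y) (@order_iso_ge0 y)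
  _ _ Au (cA M) (fun x => le_trans (ler_norm (u x)) (uM x)).
rewrite /= (functional_cst (fun f => T f y) fsA cA (@order_iso_lincomb y)).
by rewrite T1y Tu; lra.
Qed.

Lemma order_iso_preimage_bump y (V : set Y) m : open V -> V y -> 0 <= m ->
  exists u, [/\ A u, forall x, 0 <= u x, T u y = m &
    forall f, A f -> (forall z, 0 <= T f z) -> (forall z, V z -> m <= T f z) ->
      forall x, u x <= f x].
Proof.
move=> oV Vy m_ge0.
have [g [Bg gy1 g0 g01]] := psB y (open_closedC oV) (fun nVy => nVy Vy).
have [u Au Tu] :=
  order_iso_surj (function_space_lincomb fsB m _ _ Bg (function_space0 fsB)).
exists u; split => // [x||].
- by apply: order_iso_ge0_inv => // z; rewrite Tu; have /andP[] := g01 z; nra.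
- by rewrite Tu gy1 mulr1 addr0.
move=> f Af Tf_ge0 Tf_geV x.
suff : 0 <= -1 * u x + f x by lra.
apply: (order_iso_ge0_inv (function_space_lincomb fsA (-1) _ _ Au Af)) => z.
rewrite order_iso_lincomb // Tu; have /andP[g_ge0 g_le1] := g01 z.
have [Vz|nVz] := pselect (V z); first by have := Tf_geV z Vz; nra.
by rewrite g0 //; have := Tf_ge0 z; lra.
Qed.

Lemma eval_support_uniq y x1 x2 :
  functional_support A (fun f => T f y) x1 ->
  functional_support A (fun f => T f y) x2 -> x1 = x2.
Proof.
move=> supp1 supp2; apply: contrapT => /eqP x12.
move: hX; rewrite open_hausdorff => /(_ x1 x2 x12).
move=> [[U1 U2] /= [+ +] [oU1 oU2 /eqP U12]]; rewrite !in_setE => U1x1 U2x2.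
have [f1 [Af1 f1_ge0 f1_out Tf1]] := supp1 U1 oU1 U1x1.
have [f2 [Af2 f2_ge0 f2_out Tf2]] := supp2 U2 oU2 U2x2.
set mn := Num.min (T f1 y) (T f2 y); pose m := mn / 2.
have mn_gt0 : 0 < mn by rewrite lt_min Tf1 Tf2.
have mn_le1 : mn <= T f1 y by rewrite ge_min lexx.
have mn_le2 : mn <= T f2 y by rewrite ge_min lexx orbT.
pose V := [set z | m < T f1 z] `&` [set z | m < T f2 z].
have oV : open V.
  have oTf f : A f -> open [set z | m < T f z].
    move=> Af; apply: (@open_comp _ _ (T f) [set r | m < r]); last exact: open_gt.
    by move=> z _; exact: function_space_continuous fsB _ (order_iso_in Af) z.
  exact: openI (oTf _ Af1) (oTf _ Af2).
have Vy : V y by split; rewrite /= /m; lra.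
have m_ge0 : 0 <= m by rewrite /m; lra.
have [u [Au u_ge0 Tuy u_le]] := @order_iso_preimage_bump y V m oV Vy m_ge0.
have u0 : u = (fun _ => 0).
  apply: funext => x; apply/le_anti; rewrite u_ge0 andbT.
  have le1 := u_le f1 Af1 (fun z => order_iso_ge0 z Af1 f1_ge0) (fun z Vz => ltW Vz.1) x.
  have le2 := u_le f2 Af2 (fun z => order_iso_ge0 z Af2 f2_ge0) (fun z Vz => ltW Vz.2) x.
  have [U1x|/f1_out f1x] := pselect (U1 x); last by move: le1; rewrite f1x.
  have [U2x|/f2_out f2x] := pselect (U2 x); last by move: le2; rewrite f2x.
  by have : (U1 `&` U2) x by []; rewrite U12.
move: Tuy; rewrite u0 (functional0 (fun f => T f y) fsA (@order_iso_lincomb y)) /m.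
lra.
Qed.
Lemma weighted_composition_continuous (k : Y -> X) :
  (forall f, A f -> forall y, T f y = T (fun _ => 1) y * f (k y)) -> continuous k.
Proof.
move=> Tk; apply/continuousP => U oU; rewrite openE => y /= Uky.
have [f [Af fky1 f0 _]] := psA (k y) (open_closedC oU) (fun nUky => nUky Uky).
have Tfy : 0 < T f y by rewrite Tk // fky1 mulr1 order_iso_one_gt0.
have Tf_near : \forall z \near y, 0 < T f z.
  exact: cvgr_gt (function_space_continuous fsB _ (order_iso_in Af) y) _ Tfy.
rewrite /interior; apply: filterS Tf_near => z Tfz; apply: contrapT => nUkz.
by move: Tfz; rewrite Tk // f0 // mulr0 ltxx.
Qed.

Lemma order_iso_weighted_composition : exists2 k : Y -> X, continuous k &
  forall f, A f -> forall y, T f y = T (fun _ => 1) y * f (k y).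
Proof.
have supp_y y : exists x, functional_support A (fun f => T f y) x.
  exact: (functional_support_nonempty (fun f => T f y) cX fsA cA psA
    (@order_iso_lincomb y) (@order_iso_ge0 y) (order_iso_one_gt0 y)).
have [k kP] := choice supp_y.
have Tk f : A f -> forall y, T f y = T (fun _ => 1) y * f (k y).
  move=> Af y; apply: (@functional_point_eval _ _ _ (fun f => T f y) cX fsA cA psA
    (@order_iso_lincomb y) (@order_iso_ge0 y) _ _ _ Af).
  by move=> x /eval_support_uniq/(_ (kP y)).
by exists k => //; exact: weighted_composition_continuous.
Qed.

End OrderIsomorphism.

Lemma linear_order_iso_inverse (R : realType) (X Y : topologicalType)
    (A : set (X -> R)) (B : set (Y -> R)) (T : (X -> R) -> (Y -> R)) :
  is_function_space A -> is_function_space B -> linear_order_iso A B T ->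
  exists S, [/\ linear_order_iso B A S, forall f, A f -> S (T f) = f &
                forall g, B g -> T (S g) = g].
Proof.
move=> fsA fsB [TB Tlin Tinj Tsurj Tge0].
have preimage g : exists f, B g -> A f /\ T f = g.
  have [Bg|] := pselect (B g); last by exists (fun _ => 0).
  by have [f Af Tf] := Tsurj g Bg; exists f.
have [S SP] := choice preimage.
have STK f : A f -> S (T f) = f.
  by move=> Af; have [ASTf TSTf] := SP _ (TB f Af); exact: Tinj.
exists S; split=> // [|g /SP[] //]; split.
- by move=> g /SP[].
- move=> a g1 g2 Bg1 Bg2; have [A1 T1] := SP _ Bg1; have [A2 T2] := SP _ Bg2.
  have [A12 T12] := SP _ (function_space_lincomb fsB a _ _ Bg1 Bg2).
  apply: Tinj => //; first exact: function_space_lincomb.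
  by rewrite T12 Tlin // T1 T2.
- by move=> g1 g2 /SP[_ T1] /SP[_ T2] Sg12; rewrite -T1 -T2 Sg12.
- by move=> f Af; exists (T f); [exact: TB | exact: STK].
- by move=> g /SP[Ag Tg]; have := Tge0 _ Ag; rewrite Tg => -[]; split.
Qed.

Lemma precisely_separates_scaled_eq (R : realType) (Z : topologicalType)
    (C : set (Z -> R)) (z z' : Z) (c : R) :
  hausdorff_space Z -> precisely_separates C ->
  (forall f, C f -> f z = c * f z') -> z = z'.
Proof.
move=> hZ psC zz'; apply: contrapT => nzz'.
have cz' := @accessible_closed_set1 _ (hausdorff_accessible hZ) z'.
have [f [Cf fz1 f0 _]] := psC z [set z'] cz' nzz'.
by move: (zz' f Cf); rewrite fz1 f0 // mulr0; apply/eqP; rewrite oner_eq0.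
Qed.

Theorem theorem2p1 (R : realType) (X Y : topologicalType)
  (A : set (X -> R)) (B : set (Y -> R)) (T : (X -> R) -> (Y -> R)) :
  compact [set: X] -> hausdorff_space X ->
  compact [set: Y] -> hausdorff_space Y ->
  is_function_space A -> contains_constants A -> precisely_separates A ->
  is_function_space B -> contains_constants B -> precisely_separates B ->
  linear_order_iso A B T ->
  exists (h : X -> Y) (hinv : Y -> X),
    [/\ continuous h, continuous hinv, cancel h hinv, cancel hinv h &
        forall f, A f -> forall y : Y, T f y = T (fun _ => 1) y * f (hinv y)].
Proof.
move=> cX hX cY hY fsA cA psA fsB cB psB iso.
have [S [isoS STK TSK]] := linear_order_iso_inverse fsA fsB iso.
have [k kc Tk] := order_iso_weighted_composition cX hX fsA cA psA fsB cB psB iso.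
have [k' k'c Sk'] :=
  order_iso_weighted_composition cY hY fsB cB psB fsA cA psA isoS.
exists k', k; split=> // [x|y].
- apply: esym; apply: (@precisely_separates_scaled_eq _ _ _ _ _
    (S (fun _ => 1) x * T (fun _ => 1) (k' x)) hX psA) => f Af.
  by rewrite -{1}(STK f Af) (Sk' _ (order_iso_in iso _ Af)) (Tk f Af) mulrA.
- apply: esym; apply: (@precisely_separates_scaled_eq _ _ _ _ _
    (T (fun _ => 1) y * S (fun _ => 1) (k y)) hY psB) => g Bg.
  by rewrite -{1}(TSK g Bg) (Tk _ (order_iso_in isoS _ Bg)) (Sk' g Bg) mulrA.
Qed.
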